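(* Let $f:\mathbb{R}^d\to\mathbb{R}$ be twice differentiable and suppose there is $M>0$ with $\|\nabla^2 f(x)-\nabla^2 f(y)\|_{\mathrm{op}}\le M\|x-y\|$ for all $x,y$. Let $(x_k)_{k\in\mathbb{N}}$ be generated by the inner iteration described in the context. Then for all $k\ge1$, $$f(x_k)-f(x_0)\le\frac{\delta^2k}{2\sigma}-\frac38\frac{\|(k+1)\bar g_k\|^{4/3}}{\sigma^{1/3}}-\frac{\sigma}{8k^2}S_k^2+\frac{M}{12}S_k^{3/2}+\frac{1}{2\sigma}\sum_{i=0}^{k-1}\frac{\|r_i\|^2}{\|s_i\|^2},$$ where $\frac{\|r_i\|^2}{\|s_i\|^2}$ is set to $0$ if $s_i=0$.
   Context: Inner iteration (parameters $\sigma,\delta>0$, $\theta\in(0,1)$): given $x_0\in\mathbb{R}^d$ and a real symmetric matrix $B_0$, for $k=0,1,\dots$: let $m_k(s):=\langle \nabla f(x_k)+\frac{1}{k+1}\sum_{i=0}^k(2i+1)\nabla f(x_i),s\rangle+\frac12\langle B_ks,s\rangle+\frac{\sigma}{4}\|s\|^4$; choose any $s_k$ with $\|\nabla m_k(s_k)\|\le\delta\|s_k\|$; set $x_{k+1}=x_k+s_k$, $r_k=\nabla f(x_{k+1})-\nabla f(x_k)-B_ks_k$, and $B_{k+1}=\frac{1-\theta}{1+\theta}\big(B_k+\frac{r_ks_k^\top+s_kr_k^\top}{\|s_k\|^2}-\frac{\langle r_k,s_k\rangle}{\|s_k\|^4}s_ks_k^\top\big)$. Definitions for $k\ge1$: $\bar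 g_k:=\frac{1}{k(k+1)}\big(\sum_{i=0}^{k-1}(2i+1)\nabla f(x_i)+k\nabla f(x_k)\big)$ and $S_k:=\sum_{i=0}^{k-1}\|s_i\|^2$. *)

From HB Require Import structures.
From mathcomp Require Import all_boot all_order all_algebra.
From mathcomp Require Import all_classical all_reals all_analysis.
Set Implicit Arguments. Unset Strict Implicit. Unset Printing Implicit Defensive.
Import Order.TTheory GRing.Theory Num.Theory.
Import numFieldNormedType.Exports.
Local Open Scope classical_set_scope.
Local Open Scope ring_scope.

Section Defs.
Variables (R : realType) (d : nat).

Definition dot (u v : 'rV[R]_d) : R := \sum_(i < d) u ord0 i * v ord0 i.
Definition norm2 (u : 'rV[R]_d) : R := Num.sqrt (dot u u).

(* action of a matrix A on a vector v (v seen as a column): A v *)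
Definition matvec (A : 'M[R]_d) (v : 'rV[R]_d) : 'rV[R]_d := v *m A^T.

Definition outer (u v : 'rV[R]_d) : 'M[R]_d := u^T *m v.

Definition opnorm (L : 'rV[R]_d -> 'rV[R]_d) : R :=
  sup [set norm2 (L v) | v in [set v | norm2 v <= 1]].

Definition cvec (g : 'rV[R]_d -> 'rV[R]_d) (x : nat -> 'rV[R]_d) (k : nat)
  : 'rV[R]_d :=
  g (x k) + (k.+1%:R)^-1 *: \sum_(i < k.+1) ((2 * i + 1)%N%:R *: g (x i)).

(* gradient of the (cubic-quartic) model
   m_k(s) = <c_k,s> + 1/2 <B_k s,s> + sigma/4 ||s||^4, namely
   c_k + 1/2 (B_k + B_k^T) s + sigma ||s||^2 s  (= c_k + B_k s as B_k is symmetric) *)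
Definition model_grad (sigma : R) (c : 'rV[R]_d) (B : 'M[R]_d) (s : 'rV[R]_d)
  : 'rV[R]_d :=
  c + matvec (2^-1 *: (B + B^T)) s + (sigma * norm2 s ^+ 2) *: s.

Definition resid (g : 'rV[R]_d -> 'rV[R]_d) (x s : nat -> 'rV[R]_d)
  (B : nat -> 'M[R]_d) (k : nat) : 'rV[R]_d :=
  g (x k.+1) - g (x k) - matvec (B k) (s k).

(* B_{k+1} as prescribed (with Rocq's convention 1/0 = 0) *)
Definition Bnext (theta : R) (Bk : 'M[R]_d) (r s : 'rV[R]_d) : 'M[R]_d :=
  ((1 - theta) / (1 + theta)) *:
    (Bk + (norm2 s ^+ 2)^-1 *: (outer r s + outer s r)
        - (dot r s / norm2 s ^+ 4) *: outer s s).

(* \bar g_k for k >= 1 *)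
Definition gbar (g : 'rV[R]_d -> 'rV[R]_d) (x : nat -> 'rV[R]_d) (k : nat)
  : 'rV[R]_d :=
  ((k * k.+1)%N%:R)^-1 *:
    (\sum_(i < k) ((2 * i + 1)%N%:R *: g (x i)) + k%:R *: g (x k)).

Definition Ssum (s : nat -> 'rV[R]_d) (k : nat) : R :=
  \sum_(i < k) norm2 (s i) ^+ 2.

Definition sq_ratio (r s : 'rV[R]_d) : R :=
  if s == 0 then 0 else norm2 r ^+ 2 / norm2 s ^+ 2.

End Defs.

(* The Lipschitz Hessian bounds the error of the trapezoid rule along each step:
   f(x_{k+1}) - f(x_k) <= 1/2 <g_k + g_{k+1}, s_k> + M ||s_k||^3 / 12.
   With V_k := (k+1) gbar_k one has g_k + g_{k+1} = V_{k+1} - k/(k+1) V_k, and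
   V_{k+1} = grad m_k(s_k) + r_k - sigma ||s_k||^2 s_k.  Both inner products are
   then bounded by Fenchel-Young inequalities for the conjugate of
   s |-> sigma/4 ||s||^4, which turns 3/8 ||V_k||^(4/3) / sigma^(1/3) into a
   telescoping potential.  Summing over the steps and using Cauchy-Schwarz and
   sum a_i^3 <= (sum a_i^2)^(3/2) on the step lengths gives the bound. *)

From HB Require Import structures.
From mathcomp Require Import all_boot all_order all_algebra.
From mathcomp Require Import all_classical all_reals all_analysis.
From mathcomp Require Import ring lra.
Import Order.TTheory GRing.Theory Num.Theory.
Import numFieldNormedType.Exports.
Local Open Scope classical_set_scope.
Local Open Scope ring_scope.

Set Implicit Arguments. Unset Strict Implicit.

Section Euclidean.
Variables (R : realType) (d : nat).
Implicit Types (u v w : 'rV[R]_d).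

Lemma dotC u v : dot u v = dot v u.
Proof. by apply: eq_bigr => i _; rewrite mulrC. Qed.

Lemma dotDl u v w : dot (u + v) w = dot u w + dot v w.
Proof. by rewrite /dot -big_split; apply: eq_bigr => i _; rewrite mxE mulrDl. Qed.

Lemma dotZl a u v : dot (a *: u) v = a * dot u v.
Proof. by rewrite /dot mulr_sumr; apply: eq_bigr => i _; rewrite mxE mulrA. Qed.

Lemma dotNl u v : dot (- u) v = - dot u v.
Proof. by rewrite -scaleN1r dotZl mulN1r. Qed.

Lemma dotBl u v w : dot (u - v) w = dot u w - dot v w.
Proof. by rewrite dotDl dotNl. Qed.

Lemma dotDr u v w : dot u (v + w) = dot u v + dot u w.
Proof. by rewrite dotC dotDl !(dotC u). Qed.

Lemma dotZr a u v : dot u (a *: v) = a * dot u v.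
Proof. by rewrite dotC dotZl dotC. Qed.

Lemma dotNr u v : dot u (- v) = - dot u v.
Proof. by rewrite dotC dotNl dotC. Qed.

Lemma dotBr u v w : dot u (v - w) = dot u v - dot u w.
Proof. by rewrite dotDr dotNr. Qed.

Lemma dot0l v : dot 0 v = 0.
Proof. by rewrite -(scale0r 0) dotZl mul0r. Qed.

Lemma dot0r v : dot v 0 = 0.
Proof. by rewrite dotC dot0l. Qed.

Lemma dotxx_ge0 u : 0 <= dot u u.
Proof. by apply: sumr_ge0 => i _; rewrite -expr2 sqr_ge0. Qed.

Lemma dotxx_eq0 u : (dot u u == 0) = (u == 0).
Proof.
apply/idP/eqP => [|->]; last by rewrite dot0l.
rewrite psumr_eq0 => [/allP u0|i _]; last by rewrite -expr2 sqr_ge0.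
apply/rowP => i; rewrite mxE.
by have := u0 i (mem_index_enum _); rewrite /= mulf_eq0 orbb => /eqP.
Qed.

Lemma norm2_ge0 u : 0 <= norm2 u.
Proof. exact: sqrtr_ge0. Qed.

Lemma norm2_sqr u : norm2 u ^+ 2 = dot u u.
Proof. by rewrite sqr_sqrtr // dotxx_ge0. Qed.

Lemma norm2_eq0 u : (norm2 u == 0) = (u == 0).
Proof. by rewrite -sqrf_eq0 norm2_sqr dotxx_eq0. Qed.

Lemma norm2_gt0 u : (0 < norm2 u) = (u != 0).
Proof. by rewrite lt0r norm2_eq0 norm2_ge0 andbT. Qed.

Lemma norm20 : norm2 (0 : 'rV[R]_d) = 0.
Proof. by apply/eqP; rewrite norm2_eq0. Qed.

Lemma norm2Z a u : norm2 (a *: u) = `|a| * norm2 u.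
Proof.
by rewrite /norm2 dotZl dotZr mulrA -expr2 sqrtrM ?sqr_ge0 // sqrtr_sqr.
Qed.

Lemma sqr_dot_le u v : dot u v ^+ 2 <= dot u u * dot v v.
Proof.
have [->|v0] := eqVneq v 0; first by rewrite !dot0r expr0n mulr0.
have vv_gt0 : 0 < dot v v by rewrite lt0r dotxx_eq0 v0 dotxx_ge0.
pose t := dot u v / dot v v.
have := dotxx_ge0 (u - t *: v).
have tvv : t * dot v v = dot u v by rewrite /t divfK ?gt_eqF.
rewrite !dotBl !dotBr !dotZl !dotZr (dotC v u) tvv subrr subr0 => uu_ge.
have -> : dot u v ^+ 2 = t * dot u v * dot v v.
  by rewrite -mulrA (mulrC (dot u v)) mulrA tvv.
nra.
Qed.

Lemma ler_norm_dot u v : `|dot u v| <= norm2 u * norm2 v.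
Proof.
rewrite -ler_sqr ?nnegrE ?mulr_ge0 ?norm2_ge0 // real_normK ?num_real //.
by rewrite exprMn !norm2_sqr sqr_dot_le.
Qed.

Lemma ler_norm2D u v : norm2 (u + v) <= norm2 u + norm2 v.
Proof.
rewrite -ler_sqr ?nnegrE ?addr_ge0 ?norm2_ge0 // sqrrD !norm2_sqr.
rewrite dotDl !dotDr (dotC v u).
have := ler_norm_dot u v; have := ler_norm (dot u v); lra.
Qed.

Lemma ler_norm2_sum (I : finType) (w : I -> 'rV[R]_d) :
  norm2 (\sum_i w i) <= \sum_i norm2 (w i).
Proof.
elim/big_rec2: _ => [|i y1 y2 _ H]; first by rewrite norm20.
by apply: le_trans (ler_norm2D _ _) _; rewrite lerD2l.
Qed.

Lemma ler_coord_norm2 (u : 'rV[R]_d) j : `|u ord0 j| <= norm2 u.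
Proof.
rewrite -ler_sqr ?nnegrE ?norm2_ge0 // real_normK ?num_real // norm2_sqr.
by rewrite /dot (bigD1 j) //= expr2 lerDl sumr_ge0 // => i _; rewrite -expr2 sqr_ge0.
Qed.

End Euclidean.

Section OperatorNorm.
Variables (R : realType) (d : nat) (L : 'rV[R]_d -> 'rV[R]_d).
Hypotheses (L_add : {morph L : u v / u + v}) (L_scale : scalable L).

Let L0 : L 0 = 0.
Proof. by have := L_scale 0 0; rewrite !scale0r. Qed.

Lemma opnorm_has_sup : has_sup [set norm2 (L v) | v in [set v | norm2 v <= 1]].
Proof.
split; first by exists (norm2 (L 0)), 0 => //=; rewrite norm20.
exists (\sum_j norm2 (L (delta_mx 0 j))) => _ [u /= u_le1 <-].
have L_sum : L (\sum_j u 0 j *: delta_mx 0 j) = \sum_j u 0 j *: L (delta_mx 0 j).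
  elim/big_rec2: _ => [|j y1 y2 _ <-]; last by rewrite L_add L_scale.
  exact: L0.
rewrite [u]row_sum_delta L_sum; apply: le_trans (ler_norm2_sum _) _.
apply: ler_sum => j _; rewrite norm2Z ler_piMl ?norm2_ge0 //.
exact: le_trans (ler_coord_norm2 _ _) u_le1.
Qed.

Lemma ler_opnorm v : norm2 (L v) <= opnorm L * norm2 v.
Proof.
have [->|v0] := eqVneq v 0.
  by rewrite L0 norm20 mulr0.
have v_gt0 : 0 < norm2 v by rewrite norm2_gt0.
have : norm2 (L ((norm2 v)^-1 *: v)) <= opnorm L.
  apply: sup_upper_bound; first exact: opnorm_has_sup.
  exists ((norm2 v)^-1 *: v) => //=.
  by rewrite norm2Z ger0_norm ?invr_ge0 ?norm2_ge0 // mulVf ?gt_eqF.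
by rewrite L_scale norm2Z ger0_norm ?invr_ge0 ?norm2_ge0 // ler_pdivrMl // mulrC.
Qed.

End OperatorNorm.

Section RealDerivatives.
Variable R : realType.
Implicit Types (F G : R -> R) (t dF dG : R).

(* [is_deriveD], [is_deriveB], ... for functions [R -> R], with the derivative
   stated in the ring operations of [R] rather than those of its normed-module
   instance, so that [ring] and [field] apply to it. *)
Lemma is_deriveD_fun F G t dF dG : is_derive t 1 F dF -> is_derive t 1 G dG ->
  is_derive t 1 (fun u => F u + G u) (dF + dG).
Proof. by move=> hF hG; have := is_deriveD hF hG. Qed.

Lemma is_deriveB_fun F G t dF dG : is_derive t 1 F dF -> is_derive t 1 G dG ->
  is_derive t 1 (fun u => F u - G u) (dF - dG).
Proof. by move=> hF hG; have := is_deriveB hF hG. Qed.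

Lemma is_deriveM_fun F G t dF dG : is_derive t 1 F dF -> is_derive t 1 G dG ->
  is_derive t 1 (fun u => F u * G u) (F t * dG + G t * dF).
Proof. by move=> hF hG; have := is_deriveM hF hG. Qed.

Lemma is_derive1_id t : is_derive t 1 (fun u : R => u) 1.
Proof. exact: is_derive_id. Qed.

Lemma is_derive1_cst (c : R) t : is_derive t 1 (fun _ : R => c) 0.
Proof. exact: is_derive_cst. Qed.

Lemma is_derive1_eq F t dF dG : is_derive t 1 F dF -> dF = dG ->
  is_derive t 1 F dG.
Proof. by move=> ? <-. Qed.

Lemma ler_is_derive_nonpos F (dF : R -> R) (a b : R) : a <= b ->
  (forall t, is_derive t 1 F (dF t)) -> (forall t, a < t < b -> dF t <= 0) ->
  F b <= F a.
Proof.
move=> ab hF dF_le0.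
have Fc : {within `[a, b], continuous F}.
  by apply: derivable_within_continuous => t _; case: (hF t).
have F_der t : derivable F t 1 by case: (hF t).
have F'_le0 t : t \in `]a, b[ -> derive1 F t <= 0.
  by rewrite in_itv /= derive1E derive_val; exact: dF_le0.
by apply: (ler0_derive1_le_cc (fun t _ => F_der t) F'_le0 Fc);
  rewrite ?in_itv /= ?lexx ?ab.
Qed.

End RealDerivatives.

Section Trapezoid.
Variables (R : realType) (F p p' : R -> R) (L : R).
Hypothesis F_p : forall t : R, is_derive t 1 F (p t).
Hypothesis p_p' : forall t : R, is_derive t 1 p (p' t).
Hypothesis p'_lip : forall u t, `|p' u - p' t| <= L * `|u - t|.

Lemma tangent_error (t : R) : 0 <= t -> p t - p 0 - t * p' t <= L * t ^+ 2 / 2.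
Proof.
move=> t_ge0.
pose chi u := p u - u * p' t - L * t * u + L / 2 * (u * u).
have dchi (u : R) : is_derive u 1 chi (p' u - p' t - L * t + L * u).
  apply: (is_derive1_eq (is_deriveD_fun (is_deriveB_fun (is_deriveB_fun (p_p' u)
    (is_deriveM_fun (is_derive1_id u) (is_derive1_cst (p' t) u)))
    (is_deriveM_fun (is_derive1_cst (L * t) u) (is_derive1_id u)))
    (is_deriveM_fun (is_derive1_cst (L / 2) u)
      (is_deriveM_fun (is_derive1_id u) (is_derive1_id u))))).
  by field.
have : chi t <= chi 0.
  apply: ler_is_derive_nonpos t_ge0 dchi _ => u /andP[u_gt0 u_lt_t].
  have ut : `|u - t| = t - u by rewrite distrC ger0_norm // subr_ge0 ltW.
  have := ler_norm (p' u - p' t); have := p'_lip u t.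
  rewrite ut mulrBr; lra.
rewrite /chi expr2; lra.
Qed.

Lemma trapezoid_error : F 1 - F 0 <= (p 0 + p 1) / 2 + L / 12.
Proof.
pose E u := F u - u * (p 0 / 2) - u * p u / 2 - L / 12 * (u * (u * u)).
have dE (u : R) : is_derive u 1 E
    ((p u - p 0 - u * p' u) / 2 - L / 4 * (u * u)).
  apply: (is_derive1_eq (is_deriveB_fun (is_deriveB_fun (is_deriveB_fun (F_p u)
    (is_deriveM_fun (is_derive1_id u) (is_derive1_cst (p 0 / 2) u)))
    (is_deriveM_fun (is_deriveM_fun (is_derive1_id u) (p_p' u))
       (is_derive1_cst 2^-1 u)))
    (is_deriveM_fun (is_derive1_cst (L / 12) u) (is_deriveM_fun
       (is_derive1_id u) (is_deriveM_fun (is_derive1_id u) (is_derive1_id u)))))).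
  by field.
have : E 1 <= E 0.
  apply: ler_is_derive_nonpos ler01 dE _ => u /andP[u_gt0 _].
  have := tangent_error (ltW u_gt0); rewrite expr2; lra.
rewrite /E; lra.
Qed.

End Trapezoid.

Lemma is_derive_coord (R : realFieldType) (V : normedModType R) (m n : nat)
    (G : V -> 'M[R]_(m, n)) (t v : V) (dG : 'M[R]_(m, n)) i j :
  is_derive t v G dG -> is_derive t v (fun u => G u i j) (dG i j).
Proof.
move=> [G_der <-]; apply: DeriveDef; first exact: (derivable_mxP G t v).1.
by rewrite derive_mx // mxE.
Qed.

Section LineDerivatives.
Variables (R : realType) (d : nat).

Lemma is_derive_line (W : normedModType R) (F : 'rV[R]_d -> W) (y h : 'rV[R]_d)
    (t : R) : differentiable F (y + t *: h) ->
  is_derive t 1 (fun u : R => F (y + u *: h)) ('d F (y + t *: h) h).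
Proof.
move=> dF.
have quotE : (fun u : R => u^-1 *: (F (y + (u *: 1 + t) *: h) - F (y + t *: h))) =
    (fun u : R => u^-1 *: (F (u *: h + (y + t *: h)) - F (y + t *: h))).
  by apply: funext => u; rewrite [u *: 1]mulr1 scalerDl addrCA addrA addrC.
split; first by rewrite /derivable /= quotE; exact: diff_derivable.
by rewrite /derive /= quotE -/(derive F (y + t *: h) h) deriveE.
Qed.

Lemma is_derive_dot_line (g : 'rV[R]_d -> 'rV[R]_d) (y h : 'rV[R]_d) (t : R) :
  differentiable g (y + t *: h) ->
  is_derive t 1 (fun u : R => dot (g (y + u *: h)) h) (dot ('d g (y + t *: h) h) h).
Proof.
move=> dg.
have -> : (fun u : R => dot (g (y + u *: h)) h) =
    \sum_(i < d) (fun u : R => g (y + u *: h) ord0 i * h ord0 i).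
  by apply: funext => u; rewrite fct_sumE.
apply: is_derive_sum => i.
apply: is_derive_eq
  (is_deriveM (is_derive_coord ord0 i (is_derive_line dg)) (is_derive_cst _ t 1)) _.
by rewrite /cst scaler0 add0r mulrC.
Qed.

End LineDerivatives.

Section LipschitzHessian.
Variables (R : realType) (d : nat) (f : 'rV[R]_d -> R) (g : 'rV[R]_d -> 'rV[R]_d).
Variable M : R.
Hypothesis f_diff : forall y, differentiable f y.
Hypothesis f_grad : forall y v, 'd f y v = dot (g y) v.
Hypothesis g_diff : forall y, differentiable g y.
Hypothesis hess_lip :
  forall y z, opnorm (fun v => 'd g y v - 'd g z v) <= M * norm2 (y - z).

Lemma lipschitz_hessian_line (y h : 'rV[R]_d) (u t : R) :
  `|dot ('d g (y + u *: h) h) h - dot ('d g (y + t *: h) h) h|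
    <= M * norm2 h ^+ 3 * `|u - t|.
Proof.
pose D v := 'd g (y + u *: h) v - 'd g (y + t *: h) v.
have D_add : {morph D : v w / v + w}.
  by move=> v w; rewrite /D addrACA -opprD; congr (_ - _); exact: linearD.
have D_scale : scalable D.
  by move=> a v; rewrite /D scalerBr; congr (_ - _); exact: linearZ.
rewrite -dotBl; apply: le_trans (ler_norm_dot _ _) _.
have yuyt : y + u *: h - (y + t *: h) = (u - t) *: h.
  by rewrite scalerBl opprD addrACA subrr add0r.
have := hess_lip (y + u *: h) (y + t *: h); rewrite yuyt norm2Z => lip.
have := ler_opnorm D_add D_scale h; rewrite -/(D h) => Dh.
have h_ge0 := norm2_ge0 h.
have -> : M * norm2 h ^+ 3 * `|u - t| =
    M * (`|u - t| * norm2 h) * norm2 h * norm2 h by ring.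
by apply: le_trans (ler_wpM2r h_ge0 (le_trans Dh (ler_wpM2r h_ge0 lip))) _.
Qed.

Lemma trapezoid_bound (y h : 'rV[R]_d) :
  f (y + h) - f y <= 2^-1 * dot (g y + g (y + h)) h + M / 12 * norm2 h ^+ 3.
Proof.
have F_p (t : R) :
    is_derive t 1 (fun u : R => f (y + u *: h)) (dot (g (y + t *: h)) h).
  by rewrite -f_grad; exact: is_derive_line.
have := trapezoid_error F_p (fun t => is_derive_dot_line (g_diff (y + t *: h)))
  (lipschitz_hessian_line y h).
by rewrite scale1r scale0r addr0 dotDl; lra.
Qed.

End LipschitzHessian.

Section PowerInequalities.
Variable R : realType.

Lemma powR_cube_root (X : R) : 0 <= X -> (X `^ (1 / 3)) ^+ 3 = X.
Proof.
move=> X_ge0; rewrite -powR_mulrn ?powR_ge0 // -powRrM.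
by rewrite (_ : 1 / 3 * 3%:R = 1) ?powRr1 //; field.
Qed.

Lemma powR_four_thirds_div (X sigma : R) : 0 <= X -> 0 < sigma ->
  X `^ (4 / 3) / sigma `^ (1 / 3) = sigma * ((X / sigma) `^ (1 / 3)) ^+ 4.
Proof.
move=> X_ge0 sigma_gt0; have sigma_ge0 := ltW sigma_gt0.
rewrite -powR_mulrn ?powR_ge0 // -powRrM (_ : 1 / 3 * 4%:R = 4 / 3); last by field.
have -> : X `^ (4 / 3) = (X / sigma) `^ (4 / 3) * sigma `^ (4 / 3).
  by rewrite -powRM ?divr_ge0 // divfK // gt_eqF.
rewrite (_ : 4 / 3 = 1 + 1 / 3); last by field.
rewrite [sigma `^ _]powRD ?gt_eqF ?implybT // powRr1 //.
by field; rewrite gt_eqF // powR_gt0.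
Qed.

Lemma amgm_3_1 (a b : R) : 0 <= a -> 0 <= b -> 4 * a ^+ 3 * b <= 3 * a ^+ 4 + b ^+ 4.
Proof.
move=> a_ge0 b_ge0; rewrite -subr_ge0.
have -> : 3 * a ^+ 4 + b ^+ 4 - 4 * a ^+ 3 * b =
    (a - b) ^+ 2 * (3 * a ^+ 2 + 2 * a * b + b ^+ 2) by ring.
by rewrite mulr_ge0 ?sqr_ge0 // !addr_ge0 ?mulr_ge0 ?sqr_ge0.
Qed.

Lemma amgm_2_1 (a b : R) : 0 <= a -> 0 <= b -> 3 * a ^+ 4 * b <= 2 * a ^+ 6 + b ^+ 3.
Proof.
move=> a_ge0 b_ge0; rewrite -subr_ge0.
have -> : 2 * a ^+ 6 + b ^+ 3 - 3 * a ^+ 4 * b =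
    (a ^+ 2 - b) ^+ 2 * (2 * a ^+ 2 + b) by ring.
by rewrite mulr_ge0 ?sqr_ge0 // addr_ge0 ?mulr_ge0 ?sqr_ge0.
Qed.

End PowerInequalities.

(* Half the convex conjugate of [s |-> sigma / 4 * norm2 s ^+ 4]. *)
Definition half_conj_quartic (R : realType) (d : nat) (sigma : R) (w : 'rV[R]_d) : R :=
  3 / 8 * (norm2 w `^ (4 / 3) / sigma `^ (1 / 3)).

Section QuarticConjugate.
Variables (R : realType) (d : nat) (sigma : R).
Hypothesis sigma_gt0 : 0 < sigma.
Implicit Types (w s : 'rV[R]_d).

Lemma half_conj_quartic0 : half_conj_quartic sigma (0 : 'rV[R]_d) = 0.
Proof. by rewrite /half_conj_quartic norm20 powR0 ?mul0r ?mulr0 // gt_eqF. Qed.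

Lemma half_conj_quarticE w : exists2 p, 0 <= p &
  norm2 w = sigma * p ^+ 3 /\ half_conj_quartic sigma w = 3 / 8 * (sigma * p ^+ 4).
Proof.
pose p := (norm2 w / sigma) `^ (1 / 3).
exists p; first exact: powR_ge0.
rewrite /half_conj_quartic powR_four_thirds_div ?norm2_ge0 //; split=> //.
by rewrite powR_cube_root ?divr_ge0 ?norm2_ge0 ?ltW // mulrCA divff ?mulr1 ?gt_eqF.
Qed.

Lemma fenchel_young_quartic (l : R) w s : 0 <= l ->
  - (l / 2 * dot w s) <= half_conj_quartic sigma w + l ^+ 4 * sigma / 8 * norm2 s ^+ 4.
Proof.
move=> l_ge0; have [p p_ge0 [wE ->]] := half_conj_quarticE w.
have s_ge0 := norm2_ge0 s.
have ws : - dot w s <= sigma * p ^+ 3 * norm2 s.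
  by rewrite -wE; apply: le_trans (ler_norm_dot w s); rewrite -normrN ler_norm.
have := ler_wpM2l l_ge0 ws.
have := ler_wpM2l (ltW sigma_gt0) (amgm_3_1 p_ge0 (mulr_ge0 l_ge0 s_ge0)).
rewrite exprMn; nra.
Qed.

Lemma half_conj_quartic_le (A : R) w : 0 < A ->
  half_conj_quartic sigma w <= sigma * A ^+ 2 / 8 + norm2 w ^+ 2 / (4 * sigma * A).
Proof.
move=> A_gt0; have [p p_ge0 [-> ->]] := half_conj_quarticE w.
rewrite -subr_ge0.
have -> : sigma * A ^+ 2 / 8 + (sigma * p ^+ 3) ^+ 2 / (4 * sigma * A)
    - 3 / 8 * (sigma * p ^+ 4) =
    sigma * (2 * p ^+ 6 + A ^+ 3 - 3 * p ^+ 4 * A) / (8 * A).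
  by field; rewrite !gt_eqF.
apply: divr_ge0; last by rewrite mulr_ge0 // ltW.
apply: mulr_ge0; first exact: ltW.
by rewrite subr_ge0 amgm_2_1 // ltW.
Qed.

Lemma model_step_bound (delta : R) (e r s v : 'rV[R]_d) :
  norm2 e <= delta * norm2 s -> (s = 0 -> r = 0) ->
  v = e + r - (sigma * norm2 s ^+ 2) *: s ->
  2^-1 * dot v s <= delta ^+ 2 / (2 * sigma) + (2 * sigma)^-1 * sq_ratio r s
                    - half_conj_quartic sigma v - sigma / 8 * norm2 s ^+ 4.
Proof.
move=> e_le r0 vE; have dd_ge0 : 0 <= delta ^+ 2 / (2 * sigma).
  by rewrite divr_ge0 ?sqr_ge0 // mulr_ge0 // ltW.
have [s0|s_neq0] := eqVneq s 0.
  have e0 : e = 0.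
    apply/eqP; rewrite -norm2_eq0 eq_le norm2_ge0 andbT.
    by move: e_le; rewrite s0 norm20 mulr0.
  rewrite vE s0 (r0 s0) e0 norm20 /sq_ratio eqxx !(scaler0, addr0, subr0).
  by rewrite dot0l half_conj_quartic0 expr0n /=; lra.
set A := norm2 s ^+ 2; set w := e + r; rewrite -/A -/w in vE.
have s_gt0 : 0 < norm2 s by rewrite norm2_gt0.
have A_gt0 : 0 < A by rewrite exprn_gt0.
have delta_ge0 : 0 <= delta.
  by rewrite -(pmulr_lge0 _ s_gt0); exact: le_trans (norm2_ge0 e) e_le.
have vs : 2^-1 * dot v s = (dot w w - dot v v) / (4 * sigma * A) - sigma * A ^+ 2 / 4.
  have ss : dot s s = A by rewrite /A norm2_sqr.
  rewrite vE !(dotBl, dotBr, dotZl, dotZr) ss (dotC s w).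
  by field; rewrite !gt_eqF.
have ww : dot w w <= 2 * delta ^+ 2 * A + 2 * dot r r.
  have ee : dot e e <= delta ^+ 2 * A.
    by rewrite -norm2_sqr /A -exprMn ler_sqr ?nnegrE ?mulr_ge0 ?norm2_ge0.
  have := dotxx_ge0 (e - r); rewrite /w !(dotDl, dotDr, dotNl, dotNr) (dotC r e).
  lra.
have wv : (dot w w - dot v v) / (4 * sigma * A) <=
    delta ^+ 2 / (2 * sigma) + (2 * sigma)^-1 * (dot r r / A) - dot v v / (4 * sigma * A).
  rewrite -subr_ge0.
  have -> : delta ^+ 2 / (2 * sigma) + (2 * sigma)^-1 * (dot r r / A)
      - dot v v / (4 * sigma * A) - (dot w w - dot v v) / (4 * sigma * A) =
      (2 * delta ^+ 2 * A + 2 * dot r r - dot w w) / (4 * sigma * A).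
    by field; rewrite !gt_eqF.
  by rewrite divr_ge0 ?subr_ge0 // !mulr_ge0 // ltW.
have := half_conj_quartic_le v A_gt0; rewrite norm2_sqr.
rewrite /sq_ratio (negbTE s_neq0) norm2_sqr -/A vs (_ : norm2 s ^+ 4 = A ^+ 2).
  lra.
by rewrite /A -exprM.
Qed.

End QuarticConjugate.

Section SymmetricUpdate.
Variables (R : realType) (d : nat).

Lemma trmx_Bnext (theta : R) (Bk : 'M[R]_d) (r s : 'rV[R]_d) :
  Bk^T = Bk -> (Bnext theta Bk r s)^T = Bnext theta Bk r s.
Proof.
have trZ (a : R) (A : 'M[R]_d) : (a *: A)^T = a *: A^T by exact: linearZ.
move=> BkT; rewrite /Bnext trZ [(_ - _)^T]raddfB /= [(_ + _)^T]raddfD /= BkT.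
rewrite !trZ [(_ + _)^T]raddfD /= /outer !trmx_mul !trmxK.
by rewrite (addrC (r^T *m s)).
Qed.

Lemma model_grad_sym (sigma : R) (c : 'rV[R]_d) (Bk : 'M[R]_d) (s : 'rV[R]_d) :
  Bk^T = Bk -> model_grad sigma c Bk s = c + matvec Bk s + (sigma * norm2 s ^+ 2) *: s.
Proof.
move=> BkT; rewrite /model_grad BkT -[Bk + Bk]mulr2n -[Bk *+ 2]scaler_nat.
by rewrite scalerA mulVf ?scale1r ?pnatr_eq0.
Qed.

End SymmetricUpdate.

Definition weighted_grad_sum (R : realType) (d : nat) (g : 'rV[R]_d -> 'rV[R]_d)
    (x : nat -> 'rV[R]_d) (k : nat) : 'rV[R]_d :=
  \sum_(i < k) ((2 * i + 1)%N%:R *: g (x i)).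

Definition scaled_gbar (R : realType) (d : nat) (g : 'rV[R]_d -> 'rV[R]_d)
    (x : nat -> 'rV[R]_d) (k : nat) : 'rV[R]_d :=
  k.+1%:R *: gbar g x k.

Section ScaledGbar.
Variables (R : realType) (d : nat) (g : 'rV[R]_d -> 'rV[R]_d) (x : nat -> 'rV[R]_d).
Local Notation S := (weighted_grad_sum g x).
Local Notation V := (scaled_gbar g x).

Lemma scaled_gbarE k : V k = k%:R^-1 *: (S k + k%:R *: g (x k)).
Proof.
by rewrite /scaled_gbar /gbar scalerA natrM invfM mulrCA mulfV ?mulr1 ?pnatr_eq0.
Qed.

(* [gbar g x 0] is scaled by [(0 * 1)^-1 = 0]. *)
Lemma scaled_gbar0 : V 0 = 0.
Proof. by rewrite scaled_gbarE invr0 scale0r. Qed.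

Lemma scaled_gbarS k : V k.+1 = cvec g x k + (g (x k.+1) - g (x k)).
Proof.
rewrite scaled_gbarE scalerDr scalerA mulVf ?pnatr_eq0 // scale1r /cvec.
by rewrite [RHS]addrAC [g (x k) + _]addrC subrK addrC.
Qed.

Lemma grad_pair_sum k :
  g (x k) + g (x k.+1) = V k.+1 - (k%:R / k.+1%:R) *: V k.
Proof.
have shrink : (k%:R / k.+1%:R) *: V k = k.+1%:R^-1 *: (S k + k%:R *: g (x k)).
  case: k => [|k].
    by rewrite /weighted_grad_sum big_ord0 !scale0r mul0r !scale0r addr0 scaler0.
  by rewrite scaled_gbarE scalerA mulrAC divff ?pnatr_eq0 ?mul1r.
rewrite shrink scaled_gbarE /weighted_grad_sum big_ord_recr /= -/(S k).
apply/rowP => j; rewrite !mxE -!natr1 natrD natrM.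
by field; rewrite natr1 pnatr_eq0.
Qed.

Lemma scaled_gbar_model (sigma : R) (s : nat -> 'rV[R]_d) (B : nat -> 'M[R]_d) k :
  (B k)^T = B k ->
  V k.+1 = model_grad sigma (cvec g x k) (B k) (s k) + resid g x s B k
           - (sigma * norm2 (s k) ^+ 2) *: s k.
Proof.
move=> BkT; rewrite scaled_gbarS model_grad_sym // /resid.
by rewrite [RHS]addrAC addrK -[RHS]addrA [matvec _ _ + _]addrC subrK.
Qed.

End ScaledGbar.

Section FiniteSums.
Variable R : realType.

Lemma sqr_sum_le (k : nat) (a : 'I_k -> R) :
  (\sum_i a i) ^+ 2 <= k%:R * \sum_i a i ^+ 2.
Proof.
have rowE (b c : 'I_k -> R) : dot (\row_i b i) (\row_i c i) = \sum_i b i * c i.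
  by apply: eq_bigr => i _; rewrite !mxE.
have := sqr_dot_le (\row_i a i) (\row_(i < k) (1 : R)); rewrite !rowE.
under eq_bigr do rewrite mulr1; under [X in _ * X]eq_bigr do rewrite mulr1.
by under [\sum_i a i * a i]eq_bigr do rewrite -expr2; rewrite sumr_const card_ord mulrC.
Qed.

Lemma sum_cube_le (k : nat) (a : 'I_k -> R) : (forall i, 0 <= a i) ->
  \sum_i a i ^+ 3 <= (\sum_i a i ^+ 2) `^ (3 / 2).
Proof.
move=> a_ge0; set S := \sum_i a i ^+ 2.
have S_ge0 : 0 <= S by rewrite sumr_ge0 // => i _; rewrite sqr_ge0.
rewrite (_ : 3 / 2 = 1 + 2^-1); last by field.
rewrite powRD ?powRr1 ?powR12_sqrt // ?implybT; last by rewrite gt_eqF.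
rewrite /S mulr_suml; apply: ler_sum => i _; rewrite exprSr ler_wpM2l ?sqr_ge0 //.
rewrite -(ger0_norm (a_ge0 i)) -sqrtr_sqr ler_sqrt //.
by rewrite (bigD1 i) //= lerDl sumr_ge0 // => j _; rewrite sqr_ge0.
Qed.

Lemma sqr_sum_le_weighted (k : nat) (a : 'I_k -> R) :
  (\sum_i a i ^+ 2) ^+ 2 / k%:R ^+ 2 <=
    \sum_(i < k) (1 - (i%:R / i.+1%:R) ^+ 4) * a i ^+ 4.
Proof.
case: k a => [|k] a; first by rewrite !big_ord0 expr0n mul0r.
have k_gt0 : (0 : R) < k.+1%:R by rewrite ltr0n.
apply: le_trans (_ : _ <= k.+1%:R^-1 * \sum_i a i ^+ 4) _.
  have := sqr_sum_le (fun i => a i ^+ 2).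
  under [X in _ <= _ * X]eq_bigr do rewrite -exprM.
  rewrite ler_pdivrMr ?exprn_gt0 // mulrAC expr2 mulrA mulVf ?gt_eqF // mul1r.
  by rewrite mulrC.
rewrite mulr_sumr; apply: ler_sum => i _; rewrite ler_wpM2r ?exprn_even_ge0 //.
set w : R := i%:R / i.+1%:R.
have w_le1 : w <= 1 by rewrite ler_pdivrMr ?ltr0n // mul1r ler_nat.
have w_ge0 : 0 <= w by rewrite divr_ge0.
have one_sub_w : 1 - w = i.+1%:R^-1 by rewrite /w; field; rewrite addrC natr1 pnatr_eq0.
have inv_le : k.+1%:R^-1 <= i.+1%:R^-1 :> R.
  by rewrite lef_pV2 ?posrE ?ltr0n // ler_nat.
apply: le_trans inv_le _; rewrite -one_sub_w lerD2l lerN2.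
by rewrite exprS ler_piMr // exprn_ile1.
Qed.

End FiniteSums.

Section InnerIteration.
Variables (R : realType) (d : nat) (f : 'rV[R]_d -> R) (g : 'rV[R]_d -> 'rV[R]_d).
Variables (M sigma delta theta : R) (x s : nat -> 'rV[R]_d) (B : nat -> 'M[R]_d).
Hypothesis f_diff : forall y, differentiable f y.
Hypothesis f_grad : forall y v, 'd f y v = dot (g y) v.
Hypothesis g_diff : forall y, differentiable g y.
Hypothesis hess_lip :
  forall y z, opnorm (fun v => 'd g y v - 'd g z v) <= M * norm2 (y - z).
Hypothesis M_ge0 : 0 <= M.
Hypothesis sigma_gt0 : 0 < sigma.
Hypothesis B0_sym : (B 0%N)^T = B 0%N.
Hypothesis model_inexact :
  forall k, norm2 (model_grad sigma (cvec g x k) (B k) (s k)) <= delta * norm2 (s k).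
Hypothesis x_step : forall k, x k.+1 = x k + s k.
Hypothesis B_step : forall k, B k.+1 = Bnext theta (B k) (resid g x s B k) (s k).

Local Notation V := (scaled_gbar g x).
Local Notation Phi := (half_conj_quartic sigma).
Local Notation q k := (sq_ratio (resid g x s B k) (s k)).

Lemma B_sym k : (B k)^T = B k.
Proof. by elim: k => [|k IH]; rewrite ?B_step ?trmx_Bnext. Qed.

Lemma resid_step0 k : s k = 0 -> resid g x s B k = 0.
Proof. by move=> sk0; rewrite /resid x_step sk0 addr0 subrr /matvec mul0mx subr0. Qed.

Local Notation step_bound k :=
  (delta ^+ 2 / (2 * sigma) + (2 * sigma)^-1 * q k
   - sigma / 8 * ((1 - (k%:R / k.+1%:R) ^+ 4) * norm2 (s k) ^+ 4)
   + M / 12 * norm2 (s k) ^+ 3).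

Lemma descent_step k :
  (f (x k.+1) + Phi (V k.+1)) - (f (x k) + Phi (V k)) <= step_bound k.
Proof.
have := trapezoid_bound f_diff f_grad g_diff hess_lip (x k) (s k).
rewrite -x_step (grad_pair_sum g x k) dotBl (dotZl (k%:R / k.+1%:R)).
have := fenchel_young_quartic sigma_gt0 (V k) (s k)
  (divr_ge0 (ler0n R k) (ler0n R k.+1)).
have := model_step_bound sigma_gt0 (model_inexact k) (@resid_step0 k)
  (@scaled_gbar_model _ _ g x sigma s B k (B_sym k)).
move: (delta ^+ 2 / (2 * sigma)) ((2 * sigma)^-1 * q k) (dot (V k.+1) (s k))
  (dot (V k) (s k)) (Phi (V k.+1)) (Phi (V k)) (f (x k.+1)) (f (x k))
  (norm2 (s k)) (k%:R / k.+1%:R) => c1 c2 a1 a0 p1 p0 f1 f0 n l P Q T.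
lra.
Qed.

Lemma descent_sum n :
  f (x n) + Phi (V n) - f (x 0%N) <= \sum_(i < n) step_bound i.
Proof.
have := telescope_sumr (fun i => f (x i) + Phi (V i)) (leq0n n).
rewrite big_mkord scaled_gbar0 half_conj_quartic0 addr0 => <-.
by apply: ler_sum => i _; exact: descent_step.
Qed.

Lemma descent_bound k :
  f (x k) - f (x 0%N) <=
    delta ^+ 2 * k%:R / (2 * sigma) - Phi (V k)
    - sigma / (8 * k%:R ^+ 2) * Ssum s k ^+ 2 + M / 12 * Ssum s k `^ (3 / 2)
    + (2 * sigma)^-1 * \sum_(i < k) q i.
Proof.
have := descent_sum k.
rewrite !big_split /= sumrN sumr_const card_ord -[_ *+ k]mulr_natr -!mulr_sumr.
have quartic : sigma / (8 * k%:R ^+ 2) * Ssum s k ^+ 2 <=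
    sigma / 8 * \sum_(i < k) (1 - (i%:R / i.+1%:R) ^+ 4) * norm2 (s i) ^+ 4.
  have -> : sigma / (8 * k%:R ^+ 2) * Ssum s k ^+ 2 =
      sigma / 8 * (Ssum s k ^+ 2 / k%:R ^+ 2) by rewrite invfM; ring.
  apply: ler_wpM2l; first by rewrite divr_ge0 // ltW.
  exact: sqr_sum_le_weighted (fun i => norm2 (s i)).
have cubic : M / 12 * \sum_(i < k) norm2 (s i) ^+ 3 <= M / 12 * Ssum s k `^ (3 / 2).
  by rewrite ler_wpM2l ?divr_ge0 // sum_cube_le // => i; exact: norm2_ge0.
move: quartic cubic.
move: (f (x k)) (f (x 0%N)) (Phi (V k)) (\sum_(i < k) q i) ((2 * sigma)^-1)
  (sigma / (8 * k%:R ^+ 2) * Ssum s k ^+ 2) (Ssum s k `^ (3 / 2))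
  (\sum_(i < k) (1 - (i%:R / i.+1%:R) ^+ 4) * norm2 (s i) ^+ 4)
  (\sum_(i < k) norm2 (s i) ^+ 3) => fk f0 P Q u S2 S3 W4 N3 quartic cubic H.
lra.
Qed.

End InnerIteration.

Unset Implicit Arguments.

Theorem lemma4p3 (R : realType) (d : nat)
  (f : 'rV[R]_d -> R) (g : 'rV[R]_d -> 'rV[R]_d) (M sigma delta theta : R)
  (x s : nat -> 'rV[R]_d) (B : nat -> 'M[R]_d) :
  (* f twice differentiable, with gradient g and Hessian 'd g x *)
  (forall y, differentiable f y) ->
  (forall y v, 'd f y v = dot (g y) v) ->
  (forall y, differentiable g y) ->
  (* Lipschitz Hessian *)
  0 < M ->
  (forall y z, opnorm (fun v => 'd g y v - 'd g z v) <= M * norm2 (y - z)) ->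
  (* parameters *)
  0 < sigma -> 0 < delta -> 0 < theta < 1 ->
  (* inner iteration *)
  (B 0%N)^T = B 0%N ->
  (forall k, norm2 (model_grad sigma (cvec g x k) (B k) (s k))
             <= delta * norm2 (s k)) ->
  (forall k, x k.+1 = x k + s k) ->
  (forall k, B k.+1 = Bnext theta (B k) (resid g x s B k) (s k)) ->
  forall k : nat, (1 <= k)%N ->
    f (x k) - f (x 0%N) <=
      delta ^+ 2 * k%:R / (2 * sigma)
      - 3 / 8 * (norm2 (k.+1%:R *: gbar g x k) `^ (4 / 3) / sigma `^ (1 / 3))
      - sigma / (8 * k%:R ^+ 2) * Ssum s k ^+ 2
      + M / 12 * Ssum s k `^ (3 / 2)
      + (2 * sigma)^-1 * \sum_(i < k) sq_ratio (resid g x s B i) (s i).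
Proof.
move=> f_diff f_grad g_diff M_gt0 hess_lip sigma_gt0 _ _ B0_sym model_inexact
  x_step B_step k _.
exact: (descent_bound f_diff f_grad g_diff hess_lip (ltW M_gt0) sigma_gt0 B0_sym
  model_inexact x_step B_step k).
Qed.
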